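(* Let $a,m\in\mathbb{Z}$ with $m\neq 0$, and let $s\ge 0$ and $m_s\ge 1$ be as defined in the context. Then $$a^{\varphi(m_s)+s}\equiv a^s \pmod{m}.$$
   Context: $\gcd$ denotes the greatest common divisor, always chosen positive, with the convention $\gcd(0,n)=n$ for $n>0$. $\varphi$ denotes Euler's totient function, and $a^0=1$. Since congruence modulo $m$ and modulo $-m$ coincide, the construction uses $|m|$. The sequences are defined as follows. - Put $d_0=\gcd(a,|m|)$ and $m_0=|m|/d_0$. - For $i\ge 1$, and only as long as $d_{i-1}\neq 1$, put $d_i=\gcd(d_{i-1},m_{i-1})$ and $m_i=m_{i-1}/d_i$. The index $s$ is the least index $i\ge 0$ with $d_i=1$, which exists. The number $m_s$ is the corresponding term of the sequence $(m_i)$. Equivalently, $s$ and $m_s$ are the output of the following algorithm: 1. Start with $A=a$, $M=|m|$, $i=0$. 2. Compute $d=\gcd(A,M)$ and $M'=M/d$. 3. If $d=1$, output $s=i$ and $m_s=M'$. Otherwise set $A=d$, $M=M'$, $i=i+1$, and repeat from step 2. *)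

From mathcomp Require Import all_boot all_order all_algebra.
Set Implicit Arguments. Unset Strict Implicit. Unset Printing Implicit Defensive.
Import GRing.Theory Num.Theory.

(* The recursion is continued for every i
   (the paper only defines it while d_{i-1} <> 1); it agrees with the paper's
   sequence on all indices where the latter is defined. *)
Fixpoint dm_seq (a m : int) (i : nat) : nat * nat :=
  match i with
  | 0 => let d := gcdn `|a|%N `|m|%N in (d, (`|m|%N %/ d)%N)
  | j.+1 => let: (dp, mp) := dm_seq a m j in
            let d := gcdn dp mp in (d, (mp %/ d)%N)
  end.

Definition d_seq (a m : int) (i : nat) : nat := (dm_seq a m i).1.
Definition m_seq (a m : int) (i : nat) : nat := (dm_seq a m i).2.

From mathcomp Require Import all_boot all_order all_algebra all_fingroup all_solvable.
Import GRing.Theory Num.Theory.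

(* Write n = |m|.  Since d_i divides both |a| and m_(i-1) = d_i * m_i, the
   invariant n | |a|^i * d_i * m_i propagates along the sequence, so d_s = 1
   gives n | |a|^s * m_s.  Every common divisor of |a| and m_s divides every
   d_i with i <= s, hence a is coprime to m_s, and Euler's theorem gives
   m_s | a^phi(m_s) - 1.  Multiplying the two divisibilities,
   n | a^s * (a^phi(m_s) - 1). *)

Lemma Euler_exp_totientz (a : int) (n : nat) :
  coprime `|a| n -> (a ^+ totient n = 1 %[mod n])%Z.
Proof.
case: n => [|n] coprime_an; first by rewrite expr0.
have a_mod_ge0 : (0 <= (a %% n.+1)%Z)%R by rewrite modz_ge0.
have coprime_mod : coprime `|(a %% n.+1)%Z| n.+1.
  have : coprimez a n.+1 by rewrite coprimezE.
  by rewrite /coprimez -gcdz_modl -/(coprimez _ _) coprimezE.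
rewrite -modzXm -(gez0_abs a_mod_ge0) -[X in (X ^+ _)%R]natz -natrX natz.
by rewrite !modz_nat (Euler_exp_totient coprime_mod).
Qed.

Section DivisorSequence.
Variables a m : int.

Lemma d_seqS i : d_seq a m i.+1 = gcdn (d_seq a m i) (m_seq a m i).
Proof. by rewrite /d_seq /m_seq /=; case: dm_seq. Qed.

Lemma m_seqS i : m_seq a m i.+1 = (m_seq a m i %/ d_seq a m i.+1)%N.
Proof. by rewrite /d_seq /m_seq /=; case: dm_seq. Qed.

Lemma d_seq_dvd_abs i : (d_seq a m i %| `|a|)%N.
Proof.
elim: i => [|i IH]; first exact: dvdn_gcdl.
by rewrite d_seqS (dvdn_trans (dvdn_gcdl _ _) IH).
Qed.

Lemma abs_m_eq_d0_m0 : `|m|%N = (d_seq a m 0 * m_seq a m 0)%N.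
Proof. by rewrite mulnC divnK // dvdn_gcdr. Qed.

Lemma m_seq_eq_dS_mS i : m_seq a m i = (d_seq a m i.+1 * m_seq a m i.+1)%N.
Proof. by rewrite m_seqS d_seqS mulnC divnK // dvdn_gcdr. Qed.

Lemma abs_m_dvd_seq i : (`|m| %| `|a| ^ i * d_seq a m i * m_seq a m i)%N.
Proof.
elim: i => [|i IH]; first by rewrite mul1n abs_m_eq_d0_m0.
apply: (dvdn_trans IH).
rewrite m_seq_eq_dS_mS expnSr -(mulnA _ (d_seq a m i.+1)) !mulnA.
by rewrite !dvdn_mul ?d_seq_dvd_abs.
Qed.

Lemma m_seq_dvd_le j i : (j <= i)%N -> (m_seq a m i %| m_seq a m j)%N.
Proof.
elim: i => [|i IH]; first by rewrite leqn0 => /eqP ->.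
rewrite leq_eqVlt ltnS => /predU1P [-> // | /IH dvd_ij].
by apply: dvdn_trans dvd_ij; rewrite (m_seq_eq_dS_mS i) dvdn_mull.
Qed.

Lemma gcd_abs_m_seq_dvd_d_seq s i :
  (i <= s)%N -> (gcdn `|a| (m_seq a m s) %| d_seq a m i)%N.
Proof.
have gcd_dvd_m_seq j : (j <= s)%N -> (gcdn `|a| (m_seq a m s) %| m_seq a m j)%N.
  by move=> le_js; rewrite (dvdn_trans (dvdn_gcdr _ _)) // m_seq_dvd_le.
elim: i => [|i IH] le_is.
  rewrite dvdn_gcd dvdn_gcdl (dvdn_trans (gcd_dvd_m_seq 0 isT)) //.
  by rewrite abs_m_eq_d0_m0 dvdn_mull.
by rewrite d_seqS dvdn_gcd IH ?gcd_dvd_m_seq // ltnW.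
Qed.

End DivisorSequence.

(* Neither m != 0 nor the minimality of s is needed: any index with d_s = 1 works. *)
Theorem mainTheorem5 (a m : int) (s : nat) :
  m != 0 ->
  d_seq a m s = 1%N ->
  (forall i : nat, (i < s)%N -> d_seq a m i <> 1%N) ->
  (a ^+ (totient (m_seq a m s) + s) = a ^+ s %[mod m])%Z.
Proof.
move=> _ ds1 _; set ms := m_seq a m s.
have coprime_a_ms : coprime `|a| ms.
  by rewrite /coprime -dvdn1 -ds1 gcd_abs_m_seq_dvd_d_seq.
have m_dvd : (`|m| %| `|a| ^ s * ms)%N.
  by move: (abs_m_dvd_seq a m s); rewrite ds1 muln1.
have /dvdzP [k euler] : (Posz ms %| (a ^+ totient ms - 1)%R)%Z.
  by rewrite -eqz_mod_dvd Euler_exp_totientz.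
apply/eqP; rewrite eqz_mod_dvd exprD mulrC -{2}[(a ^+ s)%R]mulr1 -mulrBr euler.
by rewrite dvdzE abszM abszX abszM mulnCA dvdn_mull.
Qed.
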